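(* The Schubert cell $S_{w_0,z_1}$ is the disjoint union of exactly four $G$-orbits of points $(P,Pw_0,Pz_1n)$: $n=n(1,1,0)$, dimension $8$, trivial stabilizer; $n=n(1,0,0)$, dimension $7$, stabilizer $\{d(a,a,1/a^2):a\in\mathbb{R}^\times\}$; $n=n(0,1,0)$, dimension $7$, stabilizer $\{d(a,1/a^2,a):a\in\mathbb{R}^\times\}$; $n=n(0,0,0)$, dimension $6$, stabilizer $D$.
   Context: $G=\mathrm{SL}_3(\mathbb{R})$, $P$ the upper triangular matrices in $G$, $D$ the diagonal matrices in $G$; $G$ acts on $X=(P\backslash G)^3$ by right multiplication in each coordinate. $n(x,y,z)=\begin{pmatrix}1&x&y\\0&1&z\\0&0&1\end{pmatrix}$, $d(a,b,c)=\operatorname{diag}(a,b,c)$. $w_0=\begin{pmatrix}0&0&-1\\0&-1&0\\-1&0&0\end{pmatrix}$, $z_1=\begin{pmatrix}0&-1&0\\0&0&-1\\1&0&0\end{pmatrix}$. $S_{v,w}=\big(\{P\}\times P\backslash PvP\times P\backslash PwP\big)\cdot G$. The stabilizer of $(P,Pv,Pwn)$ is $P\cap v^{-1}Pv\cap (wn)^{-1}P(wn)$. *)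

From HB Require Import structures.
From mathcomp Require Import all_boot all_order all_algebra.
From mathcomp Require Import all_classical all_reals all_analysis.
Set Implicit Arguments. Unset Strict Implicit. Unset Printing Implicit Defensive.
Import Order.TTheory GRing.Theory Num.Theory.
Import numFieldNormedType.Exports.
Local Open Scope ring_scope.

Section Defs.
Variable R : realType.
Notation M3 := 'M[R]_3.

Definition inG (g : M3) : Prop := \det g = 1.
Definition inP (g : M3) : Prop :=
  inG g /\ forall i j : 'I_3, (j < i)%N -> g i j = 0.
Definition inD (g : M3) : Prop :=
  inG g /\ forall i j : 'I_3, i != j -> g i j = 0.

(* the point P g of P\G is represented by g; P g = P g' *)
Definition same_coset (g g' : M3) : Prop := exists p, inP p /\ g' = p *m g.

(* points of X = (P\G)^3, represented by triples of representatives *)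
Definition triple := (M3 * M3 * M3)%type.
Definition t1 (x : triple) := x.1.1.
Definition t2 (x : triple) := x.1.2.
Definition t3 (x : triple) := x.2.

Definition same_point (x y : triple) : Prop :=
  [/\ same_coset (t1 x) (t1 y), same_coset (t2 x) (t2 y) & same_coset (t3 x) (t3 y)].

Definition Gact (x : triple) (h : M3) : triple :=
  (t1 x *m h, t2 x *m h, t3 x *m h).

Definition Gorbit (x : triple) (y : triple) : Prop :=
  exists h, inG h /\ same_point (Gact x h) y.

Definition Gstab (x : triple) (h : M3) : Prop :=
  inG h /\ same_point (Gact x h) x.

(* S_{v,w} = ({P} x P\PvP x P\PwP) . G *)
Definition Schubert (v w : M3) (y : triple) : Prop :=
  exists h p q, [/\ inG h, inP p, inP q &
    same_point (h, v *m p *m h, w *m q *m h) y].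

Definition nmat (x y z : R) : M3 :=
  \matrix_(i < 3, j < 3)
    nth (0 : R) (nth [::] [:: [:: 1; x; y]; [:: 0; 1; z]; [:: 0; 0; 1]] i) j.
Definition dmat (a b c : R) : M3 :=
  \matrix_(i < 3, j < 3)
    nth (0 : R) (nth [::] [:: [:: a; 0; 0]; [:: 0; b; 0]; [:: 0; 0; c]] i) j.
Definition w0 : M3 :=
  \matrix_(i < 3, j < 3)
    nth (0 : R) (nth [::] [:: [:: 0; 0; -1]; [:: 0; -1; 0]; [:: -1; 0; 0]] i) j.
Definition z1 : M3 :=
  \matrix_(i < 3, j < 3)
    nth (0 : R) (nth [::] [:: [:: 0; -1; 0]; [:: 0; 0; -1]; [:: 1; 0; 0]] i) j.

Definition pt (v w n : M3) : triple := (1%:M, v, w *m n).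

Definition tangent_space (H : M3 -> Prop) (X : M3) : Prop :=
  exists c : R -> M3, [/\ c 0 = 1%:M, (\forall t \near 0, H (c t)),
    derivable c 0 1 & 'D_1 c 0 = X].

Definition subspace_dim (T : M3 -> Prop) (k : nat) : Prop :=
  exists B : 'M[R]_(k, 3 * 3), row_free B /\
    forall X, T X <-> (mxvec X <= B)%MS.

(* the dimension of the G-orbit of x (as the homogeneous manifold
   G / Stab(x)) is d : dim G - dim Stab(x) = 8 - dim Lie(Stab(x)) = d *)
Definition orbit_dim (x : triple) (d : nat) : Prop :=
  (d <= 8)%N /\ subspace_dim (tangent_space (Gstab x)) (8 - d).

End Defs.

(* Every point (P, P w0 p, P z1 q) of the cell is moved by p^-1 to (P, P w0, P z1 u)
   with u = q p^-1 in P, and u = b n(x,y,0) with b in P /\ z1^-1 P z1, so the cell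
   is swept out by the points pnt(x,y) = (P, P w0, P z1 n(x,y,0)).  An element of G
   carrying pnt(x,y) to pnt(x',y') fixes P and P w0, hence lies in
   P /\ w0^-1 P w0 = D; as d(a,b,c) conjugates n(x,y,0) into n(bx/a, cy/a, 0), the
   d(a,b,c) doing so are those with a x' = b x and a y' = c y.  Normalising with a
   cube root, the orbits are those of pnt(X,Y) with X, Y in {0,1}; the stabilisers
   are the stated subgroups of D, and their Lie algebras consist of the traceless
   diag(u,v,w) with X (v - u) = Y (w - u) = 0, of dimensions 0, 1, 1 and 2. *)

From mathcomp Require Import all_boot all_order all_algebra.
From mathcomp Require Import all_classical all_reals all_analysis.
From mathcomp Require Import ring lra.
Import Order.TTheory GRing.Theory Num.Theory.
Local Open Scope ring_scope.

Set Implicit Arguments. Unset Strict Implicit.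

Section ExplicitMatrices.
Variable R : comRingType.

Definition mx3 (a b c d e f g h i : R) : 'M[R]_3 :=
  \matrix_(r < 3, s < 3)
    nth 0 (nth [::] [:: [:: a; b; c]; [:: d; e; f]; [:: g; h; i]] r) s.

Lemma mx3_eta (M : 'M[R]_3) :
  M = mx3 (M 0 0) (M 0 1) (M 0 2) (M 1 0) (M 1 1) (M 1 2) (M 2 0) (M 2 1) (M 2 2).
Proof.
apply/matrixP => -[[|[|[|?]]] ?] [[|[|[|?]]] ?] //; rewrite mxE /=;
  by congr (M _ _); apply: val_inj.
Qed.

Lemma mx3_cases (M : 'M[R]_3) :
  exists a b c d e f g h i, M = mx3 a b c d e f g h i.
Proof. by do 9 eexists; exact: mx3_eta. Qed.

Lemma mx3_inj a b c d e f g h i a' b' c' d' e' f' g' h' i' :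
  mx3 a b c d e f g h i = mx3 a' b' c' d' e' f' g' h' i' ->
  [/\ a = a', b = b', c = c', d = d' & e = e'] /\ [/\ f = f', g = g', h = h' & i = i'].
Proof.
move=> E; have F r s := congr1 (fun M : 'M[R]_3 => M r s) E.
move: (F 0 0) (F 0 1) (F 0 2) (F 1 0) (F 1 1) (F 1 2) (F 2 0) (F 2 1) (F 2 2).
by rewrite !mxE /=.
Qed.

Lemma mulmx3 a b c d e f g h i a' b' c' d' e' f' g' h' i' :
  mx3 a b c d e f g h i *m mx3 a' b' c' d' e' f' g' h' i' =
  mx3 (a*a' + b*d' + c*g') (a*b' + b*e' + c*h') (a*c' + b*f' + c*i')
      (d*a' + e*d' + f*g') (d*b' + e*e' + f*h') (d*c' + e*f' + f*i')
      (g*a' + h*d' + i*g') (g*b' + h*e' + i*h') (g*c' + h*f' + i*i').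
Proof.
apply/matrixP => -[[|[|[|?]]] ?] [[|[|[|?]]] ?] //;
  by rewrite !mxE !big_ord_recr big_ord0 /= add0r !mxE.
Qed.

Lemma mx3_1 : 1%:M = mx3 1 0 0 0 1 0 0 0 1.
Proof. by apply/matrixP => -[[|[|[|?]]] ?] [[|[|[|?]]] ?] //; rewrite !mxE. Qed.

Lemma det_mx3 a b c d e f g h i :
  \det (mx3 a b c d e f g h i) = a*e*i - a*f*h - b*d*i + b*f*g + c*d*h - c*e*g.
Proof.
rewrite (expand_det_row _ 0) !big_ord_recr big_ord0 /= add0r /cofactor !mxE /=.
rewrite !(expand_det_row _ 0) !big_ord_recr !big_ord0 /= !add0r.
rewrite /cofactor !mxE /= !det_mx11 !mxE /=.
ring.
Qed.

Lemma prod3_neq0 (a b c : R) : a * b * c = 1 -> [/\ a != 0, b != 0 & c != 0].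
Proof.
by move=> abc; split; apply/eqP => x0; move: abc; rewrite x0 !(mulr0, mul0r) => /eqP;
  rewrite eq_sym oner_eq0.
Qed.

End ExplicitMatrices.

Section Cosets.
Variable R : realType.
Notation M3 := 'M[R]_3.

Lemma inP_mx3 (a b c d e f g h i : R) :
  inP (mx3 a b c d e f g h i) <-> [/\ d = 0, g = 0, h = 0 & a * e * i = 1].
Proof.
rewrite /inP /inG det_mx3; split.
  move=> [det1 low]; have := low 1 0 isT; have := low 2 0 isT; have := low 2 1 isT.
  rewrite !mxE /= => h0 g0 d0; split => //.
  by rewrite -det1 d0 g0 h0; ring.
move=> [-> -> -> diag1]; split; first by rewrite -diag1; ring.
by move=> -[[|[|[|?]]] ?] [[|[|[|?]]] ?] //; rewrite mxE.
Qed.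

Lemma inP1 : inP (1%:M : M3).
Proof. by rewrite mx3_1; apply/inP_mx3; split => //; ring. Qed.

Lemma inP_mul (p q : M3) : inP p -> inP q -> inP (p *m q).
Proof.
have [a [b [c [? [e [f [? [? [i ->]]]]]]]]] := mx3_cases p.
have [a' [b' [c' [? [e' [f' [? [? [i' ->]]]]]]]]] := mx3_cases q.
move=> /inP_mx3 [-> -> -> dp] /inP_mx3 [-> -> -> dq].
rewrite mulmx3; apply/inP_mx3; split; try ring.
by rewrite -[RHS](mulr1 1) -{1}dp -dq; ring.
Qed.

Lemma inP_inv (p : M3) : inP p -> exists q, inP q /\ q *m p = 1%:M.
Proof.
have [a [b [c [? [e [f [? [? [i ->]]]]]]]]] := mx3_cases p.
move=> /inP_mx3 [-> -> -> dp].
have [a0 e0 i0] := prod3_neq0 dp.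
exists (mx3 a^-1 (- b / (a * e)) ((b * f - c * e) / (a * e * i))
            0 e^-1 (- f / (e * i)) 0 0 i^-1).
split; first by apply/inP_mx3; split => //; rewrite -!invfM dp invr1.
by rewrite mulmx3 mx3_1; congr mx3; field; rewrite ?a0 ?e0 ?i0.
Qed.

Lemma same_coset_inP (p g : M3) : inP p -> same_coset g (p *m g).
Proof. by exists p. Qed.

Lemma same_coset1 (g : M3) : same_coset 1%:M g -> inP g.
Proof. by move=> [p [Pp ->]]; rewrite mulmx1. Qed.

Lemma same_coset_refl (g : M3) : same_coset g g.
Proof. by rewrite -{2}[g]mul1mx; apply/same_coset_inP/inP1. Qed.

Lemma same_coset_sym (g g' : M3) : same_coset g g' -> same_coset g' g.
Proof.
move=> [p [Pp ->]]; have [q [Pq qp]] := inP_inv Pp.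
by exists q; split; rewrite // mulmxA qp mul1mx.
Qed.

Lemma same_coset_trans (g g' g'' : M3) :
  same_coset g g' -> same_coset g' g'' -> same_coset g g''.
Proof.
move=> [p [Pp ->]] [p' [Pp' ->]].
by exists (p' *m p); split; [exact: inP_mul | rewrite mulmxA].
Qed.

Lemma same_coset_mulr (g g' h : M3) : same_coset g g' -> same_coset (g *m h) (g' *m h).
Proof. by move=> [p [Pp ->]]; exists p; split; rewrite // mulmxA. Qed.

Lemma same_point_sym (x y : triple R) : same_point x y -> same_point y x.
Proof. by case=> *; split; exact: same_coset_sym. Qed.

Lemma same_point_trans (x y z : triple R) :
  same_point x y -> same_point y z -> same_point x z.
Proof. by case=> ? ? ? [] *; split; apply: same_coset_trans; eassumption. Qed.

Lemma same_point_Gact (x y : triple R) (h : M3) :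
  same_point x y -> same_point (Gact x h) (Gact y h).
Proof. by case=> *; split; apply: same_coset_mulr. Qed.

Lemma GactM (x : triple R) (g h : M3) : Gact (Gact x g) h = Gact x (g *m h).
Proof. by rewrite /Gact /t1 /t2 /t3 /= !mulmxA. Qed.

Lemma Gact1 (x : triple R) : Gact x 1%:M = x.
Proof. by case: x => [[a b] c]; rewrite /Gact /t1 /t2 /t3 /= !mulmx1. Qed.

Lemma inGM (g h : M3) : inG g -> inG h -> inG (g *m h).
Proof. by rewrite /inG det_mulmx => -> ->; rewrite mulr1. Qed.

Lemma Gorbit_same_point (x x' y : triple R) :
  same_point x x' -> Gorbit x' y -> Gorbit x y.
Proof.
move=> xx' [h [Gh x'y]]; exists h; split => //.
exact: same_point_trans (same_point_Gact h xx') x'y.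
Qed.

Lemma Gorbit_Gact (x x' y : triple R) (g : M3) :
  inG g -> same_point (Gact x g) x' -> Gorbit x' y -> Gorbit x y.
Proof.
move=> Gg xgx' [h [Gh x'y]]; exists (g *m h); split; first exact: inGM.
by rewrite -GactM; exact: same_point_trans (same_point_Gact h xgx') x'y.
Qed.

Lemma Gorbit_meet (x x' y : triple R) :
  Gorbit x y -> Gorbit x' y -> exists g, inG g /\ same_point (Gact x g) x'.
Proof.
move=> [h [Gh xy]] [h' [Gh' x'y]].
have h'U : h' \in unitmx by rewrite unitmxE Gh' unitr1.
exists (h *m invmx h'); split.
  by apply: inGM; rewrite // /inG det_inv Gh' invr1.
have := same_point_Gact (invmx h') (same_point_trans xy (same_point_sym x'y)).
by rewrite !GactM mulmxV // Gact1.
Qed.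

End Cosets.

Section DiagonalExponential.
Variables (R : realType) (n : nat).
Implicit Types X : 'M[R]_n.

Lemma is_derive_expRM (u t : R) :
  is_derive t 1 (fun s => expR (u * s)) (expR (u * t) * u).
Proof.
have Du : is_derive t 1 ( *%R u) u.
  by rewrite -[u in is_derive _ _ _ u]mulr1; exact: is_deriveZ (is_derive_id t 1).
exact: is_derive1_comp (is_derive_expR (u * t)) Du.
Qed.

Definition diag_expR X (t : R) : 'M[R]_n :=
  \matrix_(i, j) if i == j then expR (X i i * t) else 0.

Lemma diag_expR_entry X i j : (fun t => diag_expR X t i j) =
  if i == j then (fun t => expR (X i i * t)) else cst 0.
Proof. by apply/funext => t; rewrite mxE; case: (i == j). Qed.

Lemma diag_expR0 X : diag_expR X 0 = 1%:M.
Proof. by apply/matrixP => i j; rewrite !mxE mulr0 expR0; case: (i == j). Qed.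

Lemma derivable_diag_expR X t : derivable (diag_expR X) t 1.
Proof.
apply/derivable_mxP => i j; rewrite diag_expR_entry; case: (i == j).
  by have [] := is_derive_expRM (X i i) t.
exact: derivable_cst.
Qed.

Lemma derive_diag_expR X : is_diag_mx X -> 'D_1 (diag_expR X) 0 = X.
Proof.
move=> /is_diag_mxP Xdiag; rewrite derive_mx; last exact: derivable_diag_expR.
apply/matrixP => i j; rewrite mxE diag_expR_entry.
have [<-|ij] := eqVneq i j; last by rewrite derive_cst Xdiag.
by rewrite (@derive_val _ _ _ _ _ _ _ (is_derive_expRM _ _)) mulr0 expR0 mul1r.
Qed.

End DiagonalExponential.

Lemma subspace_dim_span (R : realType) k (T : 'M[R]_3 -> Prop) (Y : 'I_k -> 'M[R]_3) :
  (forall c : 'rV_k, \sum_i c 0 i *: Y i = 0 -> c = 0) ->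
  (forall X, T X <-> exists c : 'rV_k, X = \sum_i c 0 i *: Y i) ->
  subspace_dim T k.
Proof.
move=> free span; exists (\matrix_(i < k) mxvec (Y i)).
have mulB (c : 'rV_k) : c *m \matrix_(i < k) mxvec (Y i) = mxvec (\sum_i c 0 i *: Y i).
  by rewrite mulmx_sum_row linear_sum; apply: eq_bigr => i _; rewrite rowK linearZ.
split.
  by apply/inj_row_free => c; rewrite mulB => /eqP; rewrite mxvec_eq0 => /eqP /free.
move=> X; rewrite span; split => [[c ->] | /submxP [c]].
  by apply/submxP; exists c; rewrite mulB.
by rewrite mulB => /(can_inj mxvecK) ->; exists c.
Qed.

Lemma cube_root (R : realType) (t : R) : exists r : R, r ^+ 3 = t.
Proof.
have cubeK (s : R) : 0 <= s -> (s `^ 3^-1) ^+ 3 = s.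
  by move=> s0; rewrite -powR_mulrn ?powR_ge0 // -powRrM mulVf ?powRr1.
have [t0|t0] := leP 0 t; first by exists (t `^ 3^-1); rewrite cubeK.
exists (- (- t) `^ 3^-1); rewrite exprNn cubeK ?oppr_ge0 ?ltW //.
by rewrite -signr_odd /= mulN1r opprK.
Qed.

Section SchubertCell.
Variable R : realType.
Notation M3 := 'M[R]_3.
Local Notation pnt x y := (pt (w0 R) (z1 R) (nmat x y 0)).

Lemma dmatE (a b c : R) : dmat a b c = mx3 a 0 0 0 b 0 0 0 c.
Proof. by []. Qed.

Lemma nmatE (x y z : R) : nmat x y z = mx3 1 x y 0 1 z 0 0 1.
Proof. by []. Qed.

Lemma w0E : w0 R = mx3 0 0 (-1) 0 (-1) 0 (-1) 0 0.
Proof. by []. Qed.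

Lemma z1E : z1 R = mx3 0 (-1) 0 0 0 (-1) 1 0 0.
Proof. by []. Qed.

Lemma det_dmat (a b c : R) : \det (dmat a b c) = a * b * c.
Proof. by rewrite dmatE det_mx3; ring. Qed.

Lemma inP_dmat (a b c : R) : a * b * c = 1 -> inP (dmat a b c).
Proof. by move=> abc; apply/inP_mx3. Qed.

Lemma scale_dmat (k a b c : R) : k *: dmat a b c = dmat (k * a) (k * b) (k * c).
Proof. by apply/matrixP => -[[|[|[|?]]] ?] [[|[|[|?]]] ?] //; rewrite !mxE /= ?mulr0. Qed.

Lemma add_dmat (a b c a' b' c' : R) :
  dmat a b c + dmat a' b' c' = dmat (a + a') (b + b') (c + c').
Proof. by apply/matrixP => -[[|[|[|?]]] ?] [[|[|[|?]]] ?] //; rewrite !mxE /= ?addr0. Qed.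

Lemma dmat0 : dmat 0 0 0 = 0 :> M3.
Proof. by apply/matrixP => -[[|[|[|?]]] ?] [[|[|[|?]]] ?] //; rewrite !mxE. Qed.

Lemma dmat_eq0 (a b c : R) : dmat a b c = 0 -> [/\ a = 0, b = 0 & c = 0].
Proof.
by rewrite -dmat0 !dmatE => /mx3_inj [[? _ _ _ ?] [_ _ _ ?]].
Qed.

Lemma w0_dmat (a b c : R) : w0 R *m dmat a b c = dmat c b a *m w0 R.
Proof. by rewrite w0E !dmatE !mulmx3; congr mx3; ring. Qed.

Lemma z1_dmat (a b c : R) : z1 R *m dmat a b c = dmat b c a *m z1 R.
Proof. by rewrite z1E !dmatE !mulmx3; congr mx3; ring. Qed.

Lemma nmat_dmat (x y z a b c : R) : a != 0 -> b != 0 ->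
  nmat x y z *m dmat a b c = dmat a b c *m nmat (b * x / a) (c * y / a) (c * z / b).
Proof.
by move=> a0 b0; rewrite !nmatE !dmatE !mulmx3; congr mx3; field; rewrite ?a0 ?b0.
Qed.

Lemma z1_upper_coset (u : M3) :
  inP u -> exists x y, same_coset (z1 R *m nmat x y 0) (z1 R *m u).
Proof.
have [a [b [c [? [e [f [? [? [i ->]]]]]]]]] := mx3_cases u.
move=> /inP_mx3 [-> -> -> aei]; have [a0 e0 i0] := prod3_neq0 aei.
(* u = mx3 a 0 0 0 e f 0 0 i *m n(b/a, c/a, 0), and z1 conjugates the first factor
   into P. *)
exists (b / a), (c / a), (mx3 e f 0 0 i 0 0 0 a); split.
  by apply/inP_mx3; split => //; rewrite -aei; ring.
by rewrite z1E nmatE !mulmx3; congr mx3; field.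
Qed.

Lemma z1_nmat_coset_inj (x y x' y' : R) :
  same_coset (z1 R *m nmat x y 0) (z1 R *m nmat x' y' 0) -> x = x' /\ y = y'.
Proof.
move=> [p [Pp E]]; have [a [b [c [d [e [f [g [h [i pE]]]]]]]]] := mx3_cases p.
move: Pp E; rewrite pE => /inP_mx3 [-> -> -> _].
rewrite z1E !nmatE !mulmx3 => /mx3_inj [_ [_ i1 ix iy]].
move: i1 ix iy; rewrite !(mul0r, mulr0, mul1r, mulr1, add0r, addr0) => <-.
by rewrite !mul1r.
Qed.

Lemma w0_coset_diag (g : M3) :
  inP g -> same_coset (w0 R) (w0 R *m g) -> exists a b c, g = dmat a b c.
Proof.
have [a [b [c [? [e [f [? [? [i ->]]]]]]]]] := mx3_cases g.
move=> /inP_mx3 [-> -> -> _] [p [Pp]].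
have [? [? [? [? [? [? [? [? [? pE]]]]]]]]] := mx3_cases p.
move: Pp; rewrite pE => /inP_mx3 [-> -> -> _].
rewrite w0E !mulmx3 => /mx3_inj [_ [f0 _ b0 c0]].
by exists a, e, i; rewrite dmatE; congr mx3; lra.
Qed.

Lemma Gact_pnt_dmat (x y a b c : R) : a * b * c = 1 ->
  same_point (Gact (pnt x y) (dmat a b c)) (pnt (b * x / a) (c * y / a)).
Proof.
move=> abc; have [a0 b0 c0] := prod3_neq0 abc.
have cba : c * b * a = 1 by rewrite -abc; ring.
have bca : b * c * a = 1 by rewrite -abc; ring.
split; apply: same_coset_sym; rewrite /Gact /pt /t1 /t2 /t3 /=.
- by rewrite mul1mx -[dmat a b c]mulmx1; apply/same_coset_inP/inP_dmat.
- by rewrite w0_dmat; apply/same_coset_inP/inP_dmat.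
- rewrite -mulmxA nmat_dmat // mulr0 mul0r mulmxA z1_dmat -mulmxA.
  exact/same_coset_inP/inP_dmat.
Qed.

Lemma Gact_pntP (x y x' y' : R) (g : M3) :
  same_point (Gact (pnt x y) g) (pnt x' y') <->
  exists a b c, [/\ a * b * c = 1, g = dmat a b c, a * x' = b * x & a * y' = c * y].
Proof.
split; last first.
  move=> [a [b [c [abc -> xx' yy']]]]; have [a0 _ _] := prod3_neq0 abc.
  have -> : x' = b * x / a by rewrite -xx'; field.
  have -> : y' = c * y / a by rewrite -yy'; field.
  exact: Gact_pnt_dmat.
case; rewrite /Gact /pt /t1 /t2 /t3 /= mul1mx.
move=> /same_coset_sym/same_coset1 Pg /same_coset_sym/(w0_coset_diag Pg) [a [b [c gE]]].
move: Pg; rewrite gE => /inP_mx3 [_ _ _ abc] S3; have [a0 _ _] := prod3_neq0 abc.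
have [_ _ S3'] := Gact_pnt_dmat x y abc.
have [<- <-] := z1_nmat_coset_inj (same_coset_trans (same_coset_sym S3') S3).
by exists a, b, c; split => //; field.
Qed.

Lemma Gstab_pnt (x y : R) (h : M3) : Gstab (pnt x y) h <->
  exists a b c, [/\ a * b * c = 1, h = dmat a b c, a * x = b * x & a * y = c * y].
Proof.
rewrite /Gstab Gact_pntP; split => [[] //|[a [b [c [abc hE xx yy]]]]].
split; last by exists a, b, c.
by rewrite /inG hE det_dmat.
Qed.

Lemma pnt_normal_form (x y : R) : exists a b c,
  [/\ a * b * c = 1, a * x = b * (x != 0)%:R & a * y = c * (y != 0)%:R].
Proof.
have [->|x0] := eqVneq x 0; have [->|y0] := eqVneq y 0 => /=.
- by exists 1, 1, 1; rewrite !mulr0 !mulr1.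
- by exists 1, y^-1, y; rewrite !mulr0 !mulr1 !mul1r mulVf.
- by exists 1, x, x^-1; rewrite !mulr0 !mulr1 !mul1r mulfV.
have [r r3] := cube_root (x * y)^-1.
have r0 : r != 0.
  by apply: contra_eq_neq r3 => ->; rewrite expr0n eq_sym invr_eq0 mulf_neq0.
exists r, (r * x), (r * y); rewrite !mulr1; split => //.
have -> : r * (r * x) * (r * y) = r ^+ 3 * (x * y) by ring.
by rewrite r3 mulVf ?mulf_neq0.
Qed.

Lemma Schubert_Gorbit (s : triple R) :
  Schubert (w0 R) (z1 R) s <-> exists X Y : bool, Gorbit (pnt X%:R Y%:R) s.
Proof.
split; last first.
  move=> [X [Y [h [Gh S]]]]; exists h, 1%:M, (nmat X%:R Y%:R 0); split => //.
  - exact: inP1.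
  - by rewrite nmatE; apply/inP_mx3; split => //; ring.
  - by move: S; rewrite /Gact /pt /t1 /t2 /t3 /= mul1mx mulmx1.
move=> [h [p [q [Gh Pp Pq S]]]]; have [p' [Pp' p'p]] := inP_inv Pp.
have [x [y xy_qp']] := z1_upper_coset (inP_mul Pq Pp').
have [a [b [c [abc xX yY]]]] := pnt_normal_form x y.
exists (x != 0), (y != 0).
apply: (Gorbit_Gact (x' := pnt x y) (g := dmat a b c)).
- by case: (inP_dmat abc).
- by apply/Gact_pntP; exists a, b, c.
apply: (Gorbit_same_point (x' := pt (w0 R) (z1 R) (q *m p'))).
  by split; [exact: same_coset_refl | exact: same_coset_refl | exact: xy_qp'].
apply: (Gorbit_Gact (x' := (1%:M, w0 R *m p, z1 R *m q)) (g := p)); first by case: Pp.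
  split; rewrite /Gact /pt /t1 /t2 /t3 /= ?mul1mx.
  - by rewrite -[p in same_coset p _]mulmx1; exact/same_coset_sym/same_coset_inP.
  - exact: same_coset_refl.
  - by rewrite -!mulmxA p'p mulmx1; exact: same_coset_refl.
by exists h; split => //; move: S; rewrite /Gact /t1 /t2 /t3 /= mul1mx.
Qed.

Lemma eq_scaled_bool (a b : R) (X X' : bool) :
  a != 0 -> b != 0 -> a * X'%:R = b * X%:R -> X = X'.
Proof.
move=> a0 b0; case: X; case: X' => //=; rewrite ?mulr1 ?mulr0 => /eqP;
  by rewrite ?(negbTE a0) // eq_sym (negbTE b0).
Qed.

Lemma Gorbit_pnt_bool_inj (X Y X' Y' : bool) (s : triple R) :
  Gorbit (pnt X%:R Y%:R) s -> Gorbit (pnt X'%:R Y'%:R) s -> X = X' /\ Y = Y'.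
Proof.
move=> o o'; have [g [_ /Gact_pntP]] := Gorbit_meet o o'.
move=> [a [b [c [abc _ xx yy]]]]; have [a0 b0 c0] := prod3_neq0 abc.
by split; [exact: (eq_scaled_bool a0 b0) | exact: (eq_scaled_bool a0 c0)].
Qed.

Lemma Gstab_pnt11 (h : M3) : Gstab (pnt 1 1) h <-> h = 1%:M.
Proof.
rewrite Gstab_pnt; split => [[a [b [c [abc -> ab ac]]]] | ->]; last first.
  by exists 1, 1, 1; rewrite mx3_1 !mulr1.
rewrite !mulr1 in ab ac; subst b c.
have a1 : a = 1.
  have : (a - 1) * (a ^+ 2 + a + 1) = 0 by rewrite -[0](subrr 1) -{3}abc; ring.
  by move/eqP; rewrite mulf_eq0 subr_eq0 => /orP[/eqP //|/eqP ?]; nra.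
by rewrite a1 dmatE mx3_1.
Qed.

Lemma Gstab_pnt10 (h : M3) :
  Gstab (pnt 1 0) h <-> exists a : R, a != 0 /\ h = dmat a a (a ^- 2).
Proof.
rewrite Gstab_pnt; split => [[a [b [c [abc -> ab _]]]] | [a [a0 ->]]].
  rewrite !mulr1 in ab; subst b; have [a0 _ _] := prod3_neq0 abc.
  exists a; split => //; congr dmat.
  by apply: (mulfI (mulf_neq0 a0 a0)); rewrite -expr2 mulfV ?expf_neq0 // -abc.
by exists a, a, (a ^- 2); split; rewrite ?mulr0 //; field.
Qed.

Lemma Gstab_pnt01 (h : M3) :
  Gstab (pnt 0 1) h <-> exists a : R, a != 0 /\ h = dmat a (a ^- 2) a.
Proof.
rewrite Gstab_pnt; split => [[a [b [c [abc -> _ ac]]]] | [a [a0 ->]]].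
  rewrite !mulr1 in ac; subst c; have [a0 _ _] := prod3_neq0 abc.
  exists a; split => //; congr dmat.
  apply: (mulfI (mulf_neq0 a0 a0)); rewrite -expr2 mulfV ?expf_neq0 // -abc.
  ring.
by exists a, (a ^- 2), a; split; rewrite ?mulr0 //; field.
Qed.

Lemma Gstab_pnt00 (h : M3) : Gstab (pnt 0 0) h <-> inD h.
Proof.
rewrite Gstab_pnt; split => [[a [b [c [abc -> _ _]]]] | [Gh offdiag]].
  split; first by rewrite /inG det_dmat.
  by move=> -[[|[|[|?]]] ?] [[|[|[|?]]] ?] //; rewrite mxE.
have hE : h = dmat (h 0 0) (h 1 1) (h 2 2).
  by rewrite {1}[h]mx3_eta !(offdiag 0 1, offdiag 0 2, offdiag 1 0, offdiag 1 2,
    offdiag 2 0, offdiag 2 1).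
exists (h 0 0), (h 1 1), (h 2 2); split; rewrite ?mulr0 //.
by rewrite -Gh [in RHS]hE det_dmat.
Qed.

Lemma diag_expR_dmat (u v w t : R) :
  diag_expR (dmat u v w) t = dmat (expR (u * t)) (expR (v * t)) (expR (w * t)).
Proof. by apply/matrixP => -[[|[|[|?]]] ?] [[|[|[|?]]] ?] //; rewrite !mxE. Qed.

Lemma is_diag_dmat (u v w : R) : is_diag_mx (dmat u v w).
Proof. by apply/is_diag_mxP => -[[|[|[|?]]] ?] [[|[|[|?]]] ?] //; rewrite mxE. Qed.

Lemma dmat_tangent_Gstab_pnt (x y u v w : R) :
  u + v + w = 0 -> x * (v - u) = 0 -> y * (w - u) = 0 ->
  tangent_space (Gstab (pnt x y)) (dmat u v w).
Proof.
move=> uvw xvu ywu; exists (diag_expR (dmat u v w)); split.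
- exact: diag_expR0.
- apply: filterE => t; rewrite diag_expR_dmat; apply/Gstab_pnt.
  exists (expR (u * t)), (expR (v * t)), (expR (w * t)); split => //.
  + by rewrite -!expRD -!mulrDl uvw mul0r expR0.
  + have [->|x0] := eqVneq x 0; first by rewrite !mulr0.
    by move/eqP: xvu; rewrite mulf_eq0 (negbTE x0) subr_eq0 => /eqP ->.
  + have [->|y0] := eqVneq y 0; first by rewrite !mulr0.
    by move/eqP: ywu; rewrite mulf_eq0 (negbTE y0) subr_eq0 => /eqP ->.
- exact: derivable_diag_expR.
- exact/derive_diag_expR/is_diag_dmat.
Qed.

Lemma tangent_Gstab_pnt_dmat (x y : R) (X : M3) :
  tangent_space (Gstab (pnt x y)) X ->
  exists u v w, [/\ u + v + w = 0, x * (v - u) = 0, y * (w - u) = 0 & X = dmat u v w].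
Proof.
move=> [c [c0 stab cd <-]].
pose f (i j : 'I_3) (t : R) : R := c t i j.
have fd i j : derivable (f i j) 0 1 by move/derivable_mxP: cd; apply.
have Dc i j : 'D_1 c 0 i j = 'D_1 (f i j) 0 by rewrite derive_mx // mxE.
have {}stab : \forall t \near 0, exists a b c',
    [/\ a * b * c' = 1, c t = dmat a b c', a * x = b * x & a * y = c' * y].
  by apply: filterS stab => t /Gstab_pnt.
have D_near i j g : (\forall t \near 0, f i j t = g t) -> 'D_1 c 0 i j = 'D_1 g 0.
  by move=> fg; rewrite Dc; exact: near_eq_derive.
have offdiag i j : i != j -> 'D_1 c 0 i j = 0.
  move=> ij; rewrite (D_near i j (cst 0)) ?derive_cst //.
  apply: filterS stab => t [a [b [c' [_ ct _ _]]]]; rewrite /f ct mxE.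
  by move: ij; case: i => -[|[|[|?]]] ?; case: j => -[|[|[|?]]] ?.
have diag1 i : f i i 0 = 1 by rewrite /f c0 mxE eqxx.
exists ('D_1 c 0 0 0), ('D_1 c 0 1 1), ('D_1 c 0 2 2); split.
- have det1 : 'D_1 (f 0 0 * f 1 1 * f 2 2) 0 = 0.
    rewrite (@near_eq_derive _ _ _ _ (@cst R R 1)) ?derive_cst //.
    by apply: filterS stab => t [a [b [c' [abc ct _ _]]]]; rewrite !fctE /f ct !mxE.
  rewrite (deriveM (derivableM (fd 0 0) (fd 1 1)) (fd 2 2)) in det1.
  rewrite (deriveM (fd 0 0) (fd 1 1)) !fctE !diag1 mul1r !scale1r in det1.
  by rewrite !Dc; lra.
- have [->|x0] := eqVneq x 0; first by rewrite mul0r.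
  rewrite (D_near 1 1 (f 0 0)) -?Dc ?subrr ?mulr0 //.
  apply: filterS stab => t [a [b [c' [_ ct ab _]]]]; rewrite /f ct !mxE /=.
  exact/esym/(mulIf x0).
- have [->|y0] := eqVneq y 0; first by rewrite mul0r.
  rewrite (D_near 2 2 (f 0 0)) -?Dc ?subrr ?mulr0 //.
  apply: filterS stab => t [a [b [c' [_ ct _ ac]]]]; rewrite /f ct !mxE /=.
  exact/esym/(mulIf y0).
- by rewrite {1}['D_1 c 0]mx3_eta !(offdiag 0 1, offdiag 0 2, offdiag 1 0, offdiag 1 2,
    offdiag 2 0, offdiag 2 1).
Qed.

Lemma tangent_Gstab_pnt (x y : R) (X : M3) :
  tangent_space (Gstab (pnt x y)) X <->
  exists u v w, [/\ u + v + w = 0, x * (v - u) = 0, y * (w - u) = 0 & X = dmat u v w].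
Proof.
split; first exact: tangent_Gstab_pnt_dmat.
by move=> [u [v [w [uvw xvu ywu ->]]]]; exact: dmat_tangent_Gstab_pnt.
Qed.

Lemma orbit_dim_pnt11 : orbit_dim (pnt 1 1) 8.
Proof.
split => //; apply: (@subspace_dim_span _ 0 _ (fun=> 0)) => [c _|X]; first exact: thinmx0.
rewrite tangent_Gstab_pnt; split => [[u [v [w [uvw vu wu ->]]]] | [c ->]].
  rewrite !mul1r in vu wu; exists 0; rewrite big_ord0 -dmat0; congr dmat; lra.
by exists 0, 0, 0; split; rewrite ?big_ord0 ?dmat0 //; ring.
Qed.

Lemma orbit_dim_pnt10 : orbit_dim (pnt 1 0) 7.
Proof.
split => //; apply: (@subspace_dim_span _ 1 _ (fun=> dmat 1 1 (-2))) => [c|X].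
  rewrite big_ord1 scale_dmat => /dmat_eq0 [c0 _ _].
  by apply/rowP => i; rewrite ord1 mxE -[RHS]c0 mulr1.
rewrite tangent_Gstab_pnt; split => [[u [v [w [uvw vu _ ->]]]] | [c ->]].
  exists (const_mx u); rewrite big_ord1 mxE scale_dmat; congr dmat; lra.
rewrite big_ord1 scale_dmat.
by exists (c 0 0), (c 0 0), (c 0 0 * -2); split; rewrite ?mulr1 ?mul0r //; ring.
Qed.

Lemma orbit_dim_pnt01 : orbit_dim (pnt 0 1) 7.
Proof.
split => //; apply: (@subspace_dim_span _ 1 _ (fun=> dmat 1 (-2) 1)) => [c|X].
  rewrite big_ord1 scale_dmat => /dmat_eq0 [c0 _ _].
  by apply/rowP => i; rewrite ord1 mxE -[RHS]c0 mulr1.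
rewrite tangent_Gstab_pnt; split => [[u [v [w [uvw _ wu ->]]]] | [c ->]].
  exists (const_mx u); rewrite big_ord1 mxE scale_dmat; congr dmat; lra.
rewrite big_ord1 scale_dmat.
by exists (c 0 0), (c 0 0 * -2), (c 0 0); split; rewrite ?mulr1 ?mul0r //; ring.
Qed.

Lemma orbit_dim_pnt00 : orbit_dim (pnt 0 0) 6.
Proof.
pose Y (i : 'I_2) : M3 := if i == 0 then dmat 1 0 (-1) else dmat 0 1 (-1).
have sumY (c : 'rV[R]_2) : \sum_i c 0 i *: Y i =
    dmat (c 0 0) (c 0 1) (- c 0 0 - c 0 1).
  have [i1 i0] : lift ord0 ord0 = 1 :> 'I_2 /\ ord0 = 0 :> 'I_2 by split; apply: val_inj.
  rewrite big_ord_recl big_ord1 i1 i0 /Y /= !scale_dmat add_dmat.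
  by congr dmat; ring.
split => //; apply: (@subspace_dim_span _ 2 _ Y) => [c|X].
  rewrite sumY => /dmat_eq0 [c0 c1 _].
  apply/rowP => -[[|[|//]] ?]; rewrite mxE; [rewrite -[RHS]c0 | rewrite -[RHS]c1];
    by congr (c _ _); apply: val_inj.
rewrite tangent_Gstab_pnt; split => [[u [v [w [uvw _ _ ->]]]] | [c ->]].
  by exists (\row_(i < 2) [:: u; v]`_i); rewrite sumY !mxE /=; congr dmat; lra.
by rewrite sumY; exists (c 0 0), (c 0 1), (- c 0 0 - c 0 1); split; rewrite ?mul0r //; ring.
Qed.

End SchubertCell.

Theorem mainTheorem6 (R : realType) :
  let n11 := nmat 1 1 0 in let n10 := nmat 1 0 0 in
  let n01 := nmat 0 1 0 in let n00 := nmat (0 : R) 0 0 in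
  let ns : seq 'M[R]_3 := [:: n11; n10; n01; n00] in
  let x (k : 'I_4) := pt (w0 R) (z1 R) (nth 0 ns k) in
  (* S_{w0,z1} is the union of the four orbits ... *)
  (forall y, Schubert (w0 R) (z1 R) y <-> exists k : 'I_4, Gorbit (x k) y) /\
  (* ... which are pairwise disjoint *)
  (forall (k l : 'I_4) y, Gorbit (x k) y -> Gorbit (x l) y -> k = l) /\
  (* n = n(1,1,0): dimension 8, trivial stabilizer *)
  (orbit_dim (pt (w0 R) (z1 R) n11) 8 /\
   forall h, Gstab (pt (w0 R) (z1 R) n11) h <-> h = 1%:M) /\
  (* n = n(1,0,0): dimension 7, stabilizer {d(a,a,1/a^2)} *)
  (orbit_dim (pt (w0 R) (z1 R) n10) 7 /\
   forall h, Gstab (pt (w0 R) (z1 R) n10) h <->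
     exists a : R, a != 0 /\ h = dmat a a (a ^- 2)) /\
  (* n = n(0,1,0): dimension 7, stabilizer {d(a,1/a^2,a)} *)
  (orbit_dim (pt (w0 R) (z1 R) n01) 7 /\
   forall h, Gstab (pt (w0 R) (z1 R) n01) h <->
     exists a : R, a != 0 /\ h = dmat a (a ^- 2) a) /\
  (* n = n(0,0,0): dimension 6, stabilizer D *)
  (orbit_dim (pt (w0 R) (z1 R) n00) 6 /\
   forall h, Gstab (pt (w0 R) (z1 R) n00) h <-> inD h).
Proof.
move=> n11 n10 n01 n00 ns x.
have x_code (k : 'I_4) :
    x k = pt (w0 R) (z1 R) (nmat (k < 2)%N%:R (~~ odd k)%:R 0).
  by case: k => -[|[|[|[|//]]]].
split.
  move=> s; rewrite Schubert_Gorbit; split => [[X [Y]] | [k]]; last first.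
    by rewrite x_code; exists (k < 2)%N, (~~ odd k).
  by case: X; case: Y => o; [exists 0 | exists 1 | exists 2 | exists 3]; rewrite x_code.
split.
  move=> k l s; rewrite !x_code => /Gorbit_pnt_bool_inj/[apply] -[].
  by case: k l => -[|[|[|[|//]]]] ? [[|[|[|[|//]]]] ?] //= *; apply: val_inj.
split; first by split; [exact: orbit_dim_pnt11 | exact: Gstab_pnt11].
split; first by split; [exact: orbit_dim_pnt10 | exact: Gstab_pnt10].
split; first by split; [exact: orbit_dim_pnt01 | exact: Gstab_pnt01].
by split; [exact: orbit_dim_pnt00 | exact: Gstab_pnt00].
Qed.
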